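(* Let $G$ be a finitely generated group with arbitrarily large finite quotients, and let $n$ be a positive integer. Then $G$ has a finite generating set $A$ such that the depth of $G$ with respect to $A$ is at least $n$.
   Context: A group $G$ has arbitrarily large finite quotients if for every integer $m$ there is a surjective homomorphism from $G$ onto a finite group of order at least $m$. For a finite generating set $A$ of $G$, let $d_A$ denote the word metric on $G$ induced by $A$ (equivalently, the path metric in the Cayley graph of $G$ with respect to $A$). The (dead-end) depth of an element $g\in G$ with respect to $A$ is the $d_A$-distance from $g$ to the complement of the closed ball $\{x\in G : d_A(1,x)\le d_A(1,g)\}$, i.e. the distance from $g$ to the nearest element $x$ with $d_A(1,x)>d_A(1,g)$. The depth of $G$ with respect to $A$ is the (possibly infinite) supremum of the depths of all elements of $G$ with respect to $A$. *)

(* An abstract (possibly infinite) group is given by an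
   explicit carrier type with operations and group axioms. *)
From Stdlib Require List.
From mathcomp Require Import all_boot all_fingroup.
Set Implicit Arguments. Unset Strict Implicit. Unset Printing Implicit Defensive.

Definition is_group (T : Type) (mul : T -> T -> T) (one : T) (inv : T -> T) : Prop :=
  (forall x y z, mul x (mul y z) = mul (mul x y) z) /\
  (forall x, mul one x = x) /\ (forall x, mul x one = x) /\
  (forall x, mul (inv x) x = one) /\ (forall x, mul x (inv x) = one).

Section Words.
Variables (T : Type) (mul : T -> T -> T) (one : T) (inv : T -> T).

Definition letter (A : seq T) (a : T) : Prop := List.In a A \/ List.In (inv a) A.

Definition represents (A : seq T) (k : nat) (g : T) : Prop :=
  exists l : seq T, size l = k /\ (forall a, List.In a l -> letter A a) /\
                    foldr mul one l = g.

Definition generates (A : seq T) : Prop := forall g, exists k, represents A k g.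

Definition finitely_generated : Prop := exists A : seq T, generates A.

Definition wlen (A : seq T) (g : T) (k : nat) : Prop :=
  represents A k g /\ forall m, represents A m g -> k <= m.

Definition wdist (A : seq T) (x y : T) (d : nat) : Prop := wlen A (mul (inv x) y) d.

(* the depth of g w.r.t. A is at least n: every x with d_A(1,x) > d_A(1,g)
   satisfies d_A(g,x) >= n (depth = infimum of these distances, +oo if none) *)
Definition elt_depth_ge (A : seq T) (g : T) (n : nat) : Prop :=
  forall x kg kx d, wlen A g kg -> wlen A x kx -> kg < kx -> wdist A g x d -> n <= d.

(* the depth of G w.r.t. A (a supremum of natural numbers / +oo) is at least n *)
Definition depth_ge (A : seq T) (n : nat) : Prop := exists g, elt_depth_ge A g n.

Definition arb_large_finite_quotients : Prop :=
  forall m : nat, exists (gT : finGroupType) (f : T -> gT),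
    (forall x y, f (mul x y) = (f x * f y)%g) /\
    (forall z : gT, exists x, f x = z) /\
    m <= #|[set: gT]|.
End Words.

From mathcomp Require Import all_boot all_fingroup.
From mathcomp Require Import zify.
Set Implicit Arguments. Unset Strict Implicit. Unset Printing Implicit Defensive.

(* Let L = 1 :: S for a generating set S and let f : G -> Q be a finite
   quotient with more than |ball_L(n)| elements, so that the diameter D of Q
   with respect to f(L) exceeds n.  Take as new generators the set A of
   elements of L-length at most R = 2D + B, B = 2nD, whose image has
   f(L)-length at most 1.  Then |x|_A >= |f x|_Q for every x, and conversely
   |x|_A <= k as soon as |x|_L <= D + kB and |f x|_Q <= k.  An element g with
   |f g|_Q = D thus has |g|_A >= D, while every x within A-distance less than
   n of g has L-length at most D + DB, hence |x|_A <= D <= |g|_A. *)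

Lemma mapP_In (T : Type) (U : eqType) (f : T -> U) (s : seq T) (z : U) :
  reflect (exists2 x, List.In x s & f x = z) (z \in map f s).
Proof.
apply: (iffP idP).
  elim: s => [|x s IH] //=; rewrite inE => /orP [/eqP -> | /IH [y sy <-]].
    by exists x; [left |].
  by exists y; [right |].
move=> [x + <-]; elim: s => [|y s IH] //= [-> | /IH xs]; rewrite inE ?eqxx //.
by rewrite xs orbT.
Qed.

Section Group.
Variables (T : Type) (mul : T -> T -> T) (one : T) (inv : T -> T).
Hypothesis hG : is_group mul one inv.

Lemma mulA x y z : mul x (mul y z) = mul (mul x y) z. Proof. by case: hG. Qed.
Lemma mul1x x : mul one x = x. Proof. by case: hG => _ []. Qed.
Lemma mulx1 x : mul x one = x. Proof. by case: hG => _ [] _ []. Qed.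
Lemma mulVx x : mul (inv x) x = one. Proof. by case: hG => _ [] _ [] _ []. Qed.
Lemma mulxV x : mul x (inv x) = one. Proof. by case: hG => _ [] _ [] _ []. Qed.

Lemma inv_uniq x z : mul x z = one -> z = inv x.
Proof. by move=> xz1; rewrite -[z]mul1x -(mulVx x) -mulA xz1 mulx1. Qed.

Lemma invK x : inv (inv x) = x.
Proof. by symmetry; apply: inv_uniq; exact: mulVx. Qed.

Lemma inv1 : inv one = one.
Proof. by symmetry; apply: inv_uniq; exact: mul1x. Qed.

Lemma invM x y : inv (mul x y) = mul (inv y) (inv x).
Proof. by symmetry; apply: inv_uniq; rewrite mulA -(mulA x y) mulxV mulx1 mulxV. Qed.

Section Represents.
Variable A : seq T.
Local Notation rep := (represents mul one inv A).

Lemma letterV a : letter inv A a -> letter inv A (inv a).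
Proof. by rewrite /letter invK; case; [right | left]. Qed.

Lemma represents0 x : rep 0 x <-> x = one.
Proof. by split=> [[[|a l] [//= _ [_ <-]]] | ->] //; exists [::]. Qed.

Lemma representsS k x :
  rep k.+1 x <-> exists a y, [/\ letter inv A a, rep k y & x = mul a y].
Proof.
split=> [[[|a l] [//= [lk] [Al <-]]] | [a [y [Aa [l [lk [Al <-]]] ->]]]].
  exists a, (foldr mul one l); split=> //; first by apply: Al; left.
  by exists l; split=> //; split=> // b lb; apply: Al; right.
exists (a :: l); split; first by rewrite /= lk.
by split=> // b [<- | /Al].
Qed.

Lemma represents1 a : letter inv A a -> rep 1 a.
Proof.
move=> Aa; apply/representsS; exists a, one.
by rewrite mulx1; split=> //; apply/represents0.
Qed.

Lemma representsD i j x y : rep i x -> rep j y -> rep (i + j) (mul x y).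
Proof.
elim: i x => [|i IH] x; first by move=> /represents0 ->; rewrite mul1x.
move=> /representsS [a [x' [Aa x'i ->]]] yj.
by apply/representsS; exists a, (mul x' y); split; [| exact: IH | rewrite mulA].
Qed.

Lemma representsV k x : rep k x -> rep k (inv x).
Proof.
elim: k x => [|k IH] x.
  by move=> /represents0 ->; rewrite inv1; apply/represents0.
move=> /representsS [a [y [Aa yk ->]]]; rewrite invM -addn1.
by apply: representsD; [exact: IH | apply/represents1/letterV].
Qed.

Lemma represents_split i j x :
  rep (i + j) x -> exists x1 x2, [/\ rep i x1, rep j x2 & x = mul x1 x2].
Proof.
elim: i x => [|i IH] x xij.
  by exists one, x; split; [exact/represents0 | | rewrite mul1x].
move/representsS: xij => [a [y [Aa /IH [y1 [y2 [y1i y2j ->]]] ->]]].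
exists (mul a y1), y2; split=> //; last by rewrite mulA.
by apply/representsS; exists a, y1.
Qed.

Lemma represents_pad i j x : letter inv A one -> i <= j -> rep i x -> rep j x.
Proof.
move=> A1 /subnKC <- xi.
have ones k : rep k one.
  elim: k => [|k IH]; first exact/represents0.
  by move: (representsD (represents1 A1) IH); rewrite mul1x.
by move: (representsD xi (ones (j - i))); rewrite mulx1.
Qed.

End Represents.

Lemma represents_incl (A B : seq T) k x :
  List.incl A B -> represents mul one inv A k x -> represents mul one inv B k x.
Proof.
move=> AB [l [lk [Al <-]]]; exists l; split=> //; split=> // a.
by move=> /Al [] /AB; [left | right].
Qed.

Lemma represents_subst (A B : seq T) m k x :
  (forall a, letter inv A a -> represents mul one inv B m a) ->
  represents mul one inv A k x -> represents mul one inv B (k * m) x.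
Proof.
move=> AB; elim: k x => [|k IH] x; first by move=> /represents0 ->; apply/represents0.
by move=> /representsS [a [y [/AB am /IH yk ->]]]; rewrite mulSn; apply: representsD.
Qed.

Section Quotient.
Variables (L : seq T) (gT : finGroupType) (f : T -> gT).
Hypothesis L1 : List.In one L.
Hypothesis fM : forall x y, f (mul x y) = (f x * f y)%g.
Local Notation repL := (represents mul one inv L).

Lemma hom1 : f one = 1%g.
Proof. by apply: (mulgI (f one)); rewrite -fM mulx1 mulg1. Qed.

Lemma homV x : f (inv x) = (f x)^-1%g.
Proof. by apply: (mulgI (f x)); rewrite -fM mulxV hom1 mulgV. Qed.

Fixpoint ball k : seq T :=
  if k is k'.+1 then
    List.flat_map
      (fun a => List.map (mul a) (ball k') ++ List.map (mul (inv a)) (ball k'))%list L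
  else [:: one].

Lemma In_ball k x : List.In x (ball k) <-> repL k x.
Proof.
elim: k x => [|k IH] x /=.
  by split=> [[<- | []] | /represents0 ->]; [apply/represents0 | left].
split.
  move=> /List.in_flat_map [b [Lb /List.in_app_iff [] /List.in_map_iff [y [<- /IH yk]]]].
    by apply/representsS; exists b, y; split=> //; left.
  by apply/representsS; exists (inv b), y; split=> //; right; rewrite invK.
move=> /representsS [a [y [[La | LVa] /IH yk ->]]]; apply/List.in_flat_map.
  by exists a; split=> //; apply/List.in_app_iff; left; apply/List.in_map_iff; exists y.
exists (inv a); split=> //; apply/List.in_app_iff; right; apply/List.in_map_iff.
by exists y; rewrite invK.
Qed.

Definition qball k : seq gT := map f (ball k).

Lemma qballP k z : reflect (exists2 w, repL k w & f w = z) (z \in qball k).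
Proof.
by apply: (iffP (mapP_In _ _ _)) => [] [w /In_ball wk <-]; exists w.
Qed.

Lemma qball_mono j k z : j <= k -> z \in qball j -> z \in qball k.
Proof.
move=> jk /qballP [w wj <-]; apply/qballP; exists w => //.
by apply: represents_pad wj => //; left.
Qed.

Lemma qballM i j u v : u \in qball i -> v \in qball j -> (u * v)%g \in qball (i + j).
Proof.
move=> /qballP [x xi <-] /qballP [y yj <-]; apply/qballP.
by exists (mul x y); [exact: representsD | rewrite fM].
Qed.

Lemma qballV k z : z \in qball k -> z^-1%g \in qball k.
Proof.
by move=> /qballP [w wk <-]; apply/qballP; exists (inv w); [exact: representsV | rewrite homV].
Qed.

Lemma qballS k z :
  z \in qball k.+1 -> exists u v, [/\ u \in qball 1, v \in qball k & z = (u * v)%g].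
Proof.
move=> /qballP [w /representsS [a [y [La yk ->]]] <-].
exists (f a), (f y); split; last by rewrite fM.
  by apply/qballP; exists a => //; exact: represents1.
by apply/qballP; exists y.
Qed.

Lemma card_le_size_ball k : (forall z, z \in qball k) -> #|[set: gT]| <= size (ball k).
Proof.
move=> cover; rewrite -(size_map f); apply: leq_trans (card_size _).
by apply/subset_leq_card/subsetP => z _; exact: cover.
Qed.

Lemma exists_covering_radius :
  (forall x, exists k, repL k x) -> (forall z, exists x, f x = z) ->
  exists k, [forall z, z \in qball k].
Proof.
move=> genL fsurj.
have near z : exists k, z \in qball k.
  by have [x <-] := fsurj z; have [k xk] := genL x; exists k; apply/qballP; exists x.
exists (\max_(z : gT) ex_minn (near z)); apply/forallP => z.
by apply: (qball_mono (leq_bigmax z)); case: ex_minnP.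
Qed.

Lemma exists_diameter n :
  (forall x, exists k, repL k x) -> (forall z, exists x, f x = z) ->
  size (ball n) < #|[set: gT]| ->
  exists2 D, n < D & (forall z, z \in qball D) /\ exists z, z \notin qball D.-1.
Proof.
move=> genL fsurj big.
case: (ex_minnP (exists_covering_radius genL fsurj)) => D /forallP coverD minD.
have nD : n < D.
  rewrite ltnNge; apply/negP => Dn; move: big; rewrite ltnNge card_le_size_ball //.
  by move=> z; apply: qball_mono Dn (coverD z).
exists D => //; split=> //; apply/forallPn/negP => /minD; lia.
Qed.

Definition lifts R := List.filter (fun c => f c \in qball 1) (ball R).
Local Notation repA R := (represents mul one inv (lifts R)).

Lemma represents1_lifts R c : repL R c -> f c \in qball 1 -> repA R 1 c.
Proof.
by move=> cR c1; apply: represents1; left; apply/List.filter_In; split=> //; apply/In_ball.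
Qed.

Lemma letter_lifts R a : letter inv (lifts R) a -> repL R a /\ f a \in qball 1.
Proof.
have In_lifts c : List.In c (lifts R) -> repL R c /\ f c \in qball 1.
  by move=> /List.filter_In [/In_ball].
case=> [/In_lifts // | /In_lifts [aR a1]].
by rewrite -[a]invK homV; split; [exact: representsV | exact: qballV].
Qed.

Lemma represents_lifts_L R k x : repA R k x -> repL (k * R) x.
Proof. by apply: represents_subst => a /letter_lifts []. Qed.

Lemma represents_lifts_qball R k x : repA R k x -> f x \in qball k.
Proof.
elim: k x => [|k IH] x.
  by move=> /represents0 ->; apply/qballP; exists one => //; exact/represents0.
move=> /representsS [a [y [/letter_lifts [_ a1] /IH yk ->]]].
by rewrite fM -add1n; exact: qballM.
Qed.

Section Diameter.
Variable D : nat.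
Hypothesis coverD : forall z, z \in qball D.

Lemma lifts_represents B k x :
  0 < k -> repL (D + k * B) x -> f x \in qball k -> repA (D + B + D) k x.
Proof.
case: k => // k _; elim: k x => [|k IH] x xL fx.
  by apply: represents1_lifts fx; apply: represents_pad xL => //; [left | lia].
(* Split off a prefix x1 of L-length D + B and correct it by a short e so that
   x1 e is a generator lifting the first letter u of f x. *)
have [x1 [x2 [x1L x2L Ex]]] :
    exists x1 x2, [/\ repL (D + B) x1, repL (k.+1 * B) x2 & x = mul x1 x2].
  by apply: represents_split; rewrite -addnA -mulSn.
subst x.
have [u [v [u1 vk fx12]]] := qballS fx.
have [e eD fe] := qballP _ _ (coverD ((f x1)^-1 * u)%g).
have -> : mul x1 x2 = mul (mul x1 e) (mul (inv e) x2).
  by rewrite -mulA (mulA e) mulxV mul1x.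
apply: (representsD (i := 1)).
  by apply: represents1_lifts; [exact: representsD | rewrite fM fe mulKVg].
apply: IH; first exact: representsD (representsV eD) x2L.
by rewrite fM homV fe invMg invgK -mulgA -fM fx12 mulKg.
Qed.

Lemma generates_lifts B : 0 < B -> 0 < D -> (forall x, exists k, repL k x) ->
  generates mul one inv (lifts (D + B + D)).
Proof.
move=> B0 D0 genL x; have [k xk] := genL x.
exists (maxn k D); apply: lifts_represents; first by rewrite leq_max D0 orbT.
  apply: represents_pad xk; first by left.
  exact: leq_trans (leq_maxl k D) (leq_trans (leq_pmulr _ B0) (leq_addl _ _)).
exact: qball_mono (leq_maxr k D) (coverD (f x)).
Qed.

Lemma lifts_depth_ge n g : n < D -> repL D g -> f g \notin qball D.-1 ->
  elt_depth_ge mul one inv (lifts (D + 2 * n * D + D)) g n.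
Proof.
move=> nD gD gfar x kg kx d [gA _] [_ xmin] kgx [gxA _].
rewrite leqNgt; apply/negP => dn.
have Dkg : D <= kg.
  rewrite leqNgt; apply/negP => kgD; move/negP: gfar; apply.
  by apply: qball_mono (represents_lifts_qball gA); lia.
have xA : repA (D + 2 * n * D + D) D x.
  apply: lifts_represents (coverD (f x)); first lia.
  have -> : x = mul g (mul (inv g) x) by rewrite mulA mulxV mul1x.
  by apply: represents_pad (representsD gD (represents_lifts_L gxA)); [left | nia].
by have := xmin D xA; lia.
Qed.

End Diameter.

End Quotient.

End Group.

Theorem proposition1 (T : Type) (mul : T -> T -> T) (one : T) (inv : T -> T)
  (hG : is_group mul one inv)
  (hfg : finitely_generated mul one inv)
  (hq : arb_large_finite_quotients mul)
  (n : nat) (hn : 0 < n) :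
  exists A : seq T, generates mul one inv A /\ depth_ge mul one inv A n.
Proof.
have [S genS] := hfg.
pose L := one :: S.
have L1 : List.In one L by left.
have genL x : exists k, represents mul one inv L k x.
  have [k xk] := genS x; exists k.
  by apply: represents_incl xk; apply/List.incl_tl/List.incl_refl.
have [gT [f [fM [fsurj big]]]] := hq (size (ball mul one inv L n)).+1.
have [D nD [coverD [z zfar]]] := exists_diameter hG L1 genL fsurj big.
have [g gD fg] := qballP hG L f _ _ (coverD z).
exists (lifts mul one inv L f (D + 2 * n * D + D)); split.
  by apply: generates_lifts => //; nia.
by exists g; apply: lifts_depth_ge => //; rewrite fg.
Qed.
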